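(* Let $\ell\ge2$ and $k\ge1$ be integers. Let $\Upsilon_\ell^k$ be the map sending a partition $\nu=(\nu_1,\ldots,\nu_k)$ with $k$ nonzero parts to the partition $(\nu_1-1,\ldots,\nu_k-1)$ (zero parts discarded), i.e. deleting the first column of the diagram. Then $\Upsilon_\ell^k$ is a bijection from $\{\nu:\nu_1\le\ell-1,\ len(\nu)=k\}$ onto $\{\sigma:\sigma_1\le\ell-2,\ len(\sigma)\le k\}$, and for every $\ell$-core $\lambda$ with $len(\lambda)=k$, \[ \rho_{\ell-1}\big(\widetilde{\Phi_\ell^k}(\lambda)\big)=\Upsilon_\ell^k\big(\rho_\ell(\lambda)\big). \]
   Context: Partitions are in English notation; box $(x,y)$ is in row $x$, column $y$; $len(\mu)$ is the number of nonzero parts. The hook length $h^\mu_{(a,c)}$ of a box is the number of boxes of $\mu$ in row $a$ weakly right of it plus the number in column $c$ strictly below it. An $m$-core is a partition none of whose hook lengths is divisible by $m$. Lapointe–Morse map: for $m\ge1$ and an $m$-core $\mu$, $\rho_m(\mu)$ is the partition whose $x$-th part is the number of boxes in row $x$ of $\mu$ having hook length $\le m$ (i.e. left-justify the rows of the skew diagram $\mu/\gamma$, where $\gamma$ consists of the boxes of $\mu$ with hook length $>m$). It is known that $\rho_m$ is a bijection from $m$-cores onto partitions with first part $\le m-1$, preserving the number of nonzero parts. For an $\ell$-core $\lambda$ with $len(\lambda)=k$, $\widetilde{\Phi_\ell^k}(\lambda)$ is obtained from the diagram of $\lambda$ by deleting every column $y$ with $h^\lambda_{(1,y)}\equiv h^\lambda_{(1,1)}\pmod\ell$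 and shifting the remaining columns left; equivalently it is the transpose of $\Phi_\ell^k(\lambda^{tr})$, where for an $\ell$-core $\nu$ with first part $k$, $\Phi_\ell^k(\nu)$ deletes all rows $x$ with $h^\nu_{(x,1)}\equiv h^\nu_{(1,1)}\pmod\ell$. It is known that $\widetilde{\Phi_\ell^k}(\lambda)$ is an $(\ell-1)$-core with at most $k$ nonzero parts. *)

From mathcomp Require Import all_boot.
Set Implicit Arguments. Unset Strict Implicit. Unset Printing Implicit Defensive.

(* A partition is a weakly decreasing list of POSITIVE parts (zero parts are
   discarded), so len(mu) = size mu.  Rows and columns are 1-indexed. *)
Definition is_partition (p : seq nat) : bool :=
  sorted geq p && all (fun x => 0 < x) p.

Definition part (p : seq nat) (x : nat) : nat := nth 0 p x.-1.

Definition col_len (p : seq nat) (c : nat) : nat := count (fun r => c <= r) p.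

(* hook length of box (a,c): boxes in row a weakly right of it plus
   boxes in column c strictly below it *)
Definition hook (p : seq nat) (a c : nat) : nat :=
  (part p a - c).+1 + (col_len p c - a).

Definition is_core (m : nat) (p : seq nat) : bool :=
  is_partition p &&
  all (fun a => all (fun c => ~~ (m %| hook p a c)) (iota 1 (part p a)))
      (iota 1 (size p)).

Definition rho (m : nat) (p : seq nat) : seq nat :=
  filter (fun x => 0 < x)
    [seq count (fun c => hook p a c <= m) (iota 1 (part p a)) | a <- iota 1 (size p)].

(* widetilde{Phi_l^k}: delete every column y with h_(1,y) = h_(1,1) mod l,
   shift remaining columns left (zero parts discarded) *)
Definition phi_tilde (l : nat) (p : seq nat) : seq nat :=
  let kept y := hook p 1 y != hook p 1 1 %[mod l] in
  filter (fun x => 0 < x)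
    [seq count kept (iota 1 r) | r <- p].

Definition upsilon (p : seq nat) : seq nat :=
  filter (fun x => 0 < x) [seq x.-1 | x <- p].

(* Write [beta a] for the hook length of the box [(a,1)] and [cobeta c] for
   [hook(1,1) - hook(1,c)]; then [hook(a,c) = beta a - cobeta c], and the column
   [c] is deleted by Phi exactly when [l] divides [cobeta c].  In an [l]-core no
   [beta a] is divisible by [l], so in every row exactly one deleted box has
   hook length [<= l] (the one whose cobeta number is the largest multiple of
   [l] below [beta a]).  Deleting columns lowers the hook length of a remaining
   box by the number of deleted columns to its right, which is at most the
   number of multiples of [l] between its cobeta number and [beta a]; hence a
   box with hook length [> l] keeps a hook length [>= l], while one with hook
   length [< l] (the value [l] does not occur) stays [< l].  So every row of
   [rho_l(lambda)] loses exactly one box, which is what [Upsilon] does. *)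

From mathcomp Require Import all_boot zify.
Set Implicit Arguments. Unset Strict Implicit.

Local Notation drop0 s := [seq x <- s | 0 < x].

Lemma geq_trans : transitive geq.
Proof. exact: rev_trans leq_trans. Qed.

Lemma eq_dvdn_window l x y : l %| x -> l %| y -> x < y + l -> y < x + l -> x = y.
Proof.
move=> /dvdnP[u ->] /dvdnP[v ->]; rewrite -!mulSnr.
case: l => [|l]; first by rewrite !muln0.
by rewrite !ltn_pmul2r // !ltnS => le_uv le_vu; congr (_ * _); lia.
Qed.

Lemma divn_diff_bound l x y : 1 < l -> x + l <= y -> y %/ l - x %/ l + l <= y - x + 1.
Proof. by move=> *; nia. Qed.

Lemma count_iota1S (P : pred nat) n : count P (iota 1 n.+1) = count P (iota 1 n) + P n.+1.
Proof. by rewrite -[n.+1]addn1 iotaD count_cat /= addn0 add1n addn1. Qed.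

Lemma count_iota1_mono (P : pred nat) m n : m <= n -> count P (iota 1 m) <= count P (iota 1 n).
Proof. by move=> le_mn; rewrite -(subnKC le_mn) iotaD count_cat leq_addr. Qed.

Lemma count_iota1_reindex (Q P : pred nat) n :
  count P (iota 1 (count Q (iota 1 n))) =
  count (fun c => Q c && P (count Q (iota 1 c))) (iota 1 n).
Proof.
elim: n => // n IHn; rewrite [RHS]count_iota1S -IHn count_iota1S /=.
by case: (Q n.+1); rewrite /= ?addn0 // addn1 count_iota1S.
Qed.

Lemma col_len_leq p c : col_len p c <= size p.
Proof. exact: count_size. Qed.

Lemma col_len_leS p c : col_len p c.+1 <= col_len p c.
Proof. by apply: sub_count => x /ltnW. Qed.

Lemma col_len1 p : is_partition p -> col_len p 1 = size p.
Proof. by case/andP=> _; rewrite all_count => /eqP. Qed.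

Lemma part_gt0 p a : is_partition p -> 0 < a <= size p -> 0 < part p a.
Proof.
case/andP=> _ /allP p_pos /andP[a_gt0 a_le]; apply: p_pos.
by rewrite /part mem_nth // prednK.
Qed.

Lemma nth_leq_head p i : sorted geq p -> nth 0 p i <= head 0 p.
Proof.
case: p => [|x s] /= x_path; first by rewrite nth_nil.
have /allP x_max := order_path_min geq_trans x_path.
case: i => //= i; case: (ltnP i (size s)) => [i_lt | ?]; last by rewrite nth_default.
exact/x_max/mem_nth.
Qed.

Lemma mem_leq_head p y : sorted geq p -> y \in p -> y <= head 0 p.
Proof. by move=> p_sorted p_y; rewrite -(nth_index 0 p_y) nth_leq_head. Qed.

Lemma part_leq_part1 p a : sorted geq p -> part p a <= part p 1.
Proof. exact: nth_leq_head. Qed.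

Lemma leq_col_len p a c : sorted geq p -> 0 < a -> 0 < c ->
  (a <= col_len p c) = (c <= part p a).
Proof.
elim: p a => [|x s IHs] a /= s_sorted a_gt0 c_gt0.
  by rewrite /col_len /part nth_nil; lia.
rewrite /col_len /part /=; case: (leqP c x) => [c_le_x | x_lt_c].
  case: a a_gt0 => // [[|a]] _ /=; first by rewrite c_le_x.
  by rewrite add1n ltnS (IHs _ (path_sorted s_sorted)).
have /allP x_max := order_path_min geq_trans s_sorted.
have -> : count (leq c) s = 0.
  by apply/eqP; rewrite -leqn0 leqNgt -has_count; apply/hasPn => y /x_max /= y_le_x; lia.
have := @nth_leq_head (x :: s) a.-1 s_sorted; move: (nth 0 _ _) => y /= y_le_x.
apply/idP/idP => //; lia.
Qed.

Definition beta (p : seq nat) a := part p a + size p - a.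
Definition cobeta (p : seq nat) c := size p + c.-1 - col_len p c.

Lemma cobeta1 p : is_partition p -> cobeta p 1 = 0.
Proof. by move=> p_part; rewrite /cobeta col_len1 // addn0 subnn. Qed.

Lemma ltn_cobeta p c1 c2 : 0 < c1 -> c1 < c2 -> cobeta p c1 < cobeta p c2.
Proof.
have ltn_cobetaS c : 0 < c -> cobeta p c < cobeta p c.+1.
  by rewrite /cobeta; have := col_len_leq p c; have := col_len_leS p c; lia.
move=> c1_gt0; elim: c2 => // c2 IHc; rewrite ltnS leq_eqVlt => /orP[/eqP<- | lt_c].
  exact: ltn_cobetaS.
by apply: ltn_trans (IHc lt_c) (ltn_cobetaS _ _); lia.
Qed.

Lemma cobeta_inj p c1 c2 : 0 < c1 -> 0 < c2 -> cobeta p c1 = cobeta p c2 -> c1 = c2.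
Proof.
move=> c1_gt0 c2_gt0 eq_cob; case: (ltngtP c1 c2) => // lt_c.
- by have := ltn_cobeta p c1_gt0 lt_c; rewrite eq_cob ltnn.
- by have := ltn_cobeta p c2_gt0 lt_c; rewrite eq_cob ltnn.
Qed.

Section Hooks.

Variable p : seq nat.
Hypothesis p_sorted : sorted geq p.

Lemma hook_cobeta a c : 0 < a -> 0 < c -> c <= part p a ->
  hook p a c + cobeta p c = beta p a.
Proof.
move=> a_gt0 c_gt0 c_le; have := leq_col_len p_sorted a_gt0 c_gt0.
rewrite c_le /hook /cobeta /beta; have := col_len_leq p c; lia.
Qed.

Lemma beta_lt_cobeta b c : 0 < b <= size p -> 0 < c -> part p b < c ->
  beta p b < cobeta p c.
Proof.
move=> /andP[b_gt0 b_le] c_gt0 lt_c; have := leq_col_len p_sorted b_gt0 c_gt0.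
rewrite [c <= _]leqNgt lt_c /beta /cobeta => /negbT.
by have := col_len_leq p c; lia.
Qed.

End Hooks.

Lemma beta_cobeta_cover p b N : is_partition p -> 0 < b <= size p -> N < beta p b ->
  (exists2 a, 0 < a <= size p & beta p a = N) \/
  (exists2 c, 0 < c <= part p b & cobeta p c = N).
Proof.
move=> p_part b_row N_lt; have p_sorted : sorted geq p by case/andP: p_part.
have ex_c : exists c, (0 < c) && (N <= cobeta p c).
  by exists N.+1; rewrite /cobeta; have := col_len_leq p N.+1; lia.
case: (ex_minnP ex_c) => c /andP[c_gt0 N_le] c_min.
case: (ltngtP N (cobeta p c)) N_le => // [N_lt_c | eq_N] _; last first.
  right; exists c => //; rewrite c_gt0 leqNgt /=; apply/negP => lt_c.
  by have := beta_lt_cobeta p_sorted b_row c_gt0 lt_c; lia.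
have c_gt1 : 1 < c by case: c {c_min} c_gt0 N_lt_c => // [[|c]] //; rewrite cobeta1.
have cobeta_pred_lt : cobeta p c.-1 < N.
  by rewrite ltnNge; apply/negP => le_N; have := c_min c.-1; rewrite le_N andbT; lia.
(* the row [a] whose last box lies in column [c - 1] has [beta p a = N] *)
left; set a := c.-1 + size p - N.
have a_gt0 : 0 < a by move: N_lt_c; rewrite /a /cobeta; lia.
have c_pred_gt0 : 0 < c.-1 by lia.
have := leq_col_len p_sorted a_gt0 c_pred_gt0; have := leq_col_len p_sorted a_gt0 c_gt0.
move: N_lt_c cobeta_pred_lt; rewrite /cobeta.
have := col_len_leq p c.-1; have := col_len_leq p c.
exists a; first lia.
rewrite /beta; lia.
Qed.

Definition phi_keep l p y := hook p 1 y != hook p 1 1 %[mod l].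

Lemma phi_keepE l p y : is_partition p -> 0 < size p -> 0 < y <= part p 1 ->
  phi_keep l p y = ~~ (l %| cobeta p y).
Proof.
move=> p_part p_ne0 /andP[y_gt0 y_le]; have p_sorted : sorted geq p by case/andP: p_part.
have hook_y := hook_cobeta p_sorted (isT : 0 < 1) y_gt0 y_le.
have := hook_cobeta p_sorted (isT : 0 < 1) (isT : 0 < 1) (@part_gt0 p 1 p_part p_ne0).
rewrite cobeta1 // addn0 => hook_11.
by rewrite /phi_keep hook_11 -hook_y -{1}[hook p 1 y]addn0 eqn_modDl mod0n eq_sym.
Qed.

Definition num_kept l p e := count (phi_keep l p) (iota 1 e).

Definition num_deleted l p e := count (predC (phi_keep l p)) (iota 1 e).

Lemma num_kept_deleted l p e : num_kept l p e + num_deleted l p e = e.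
Proof. by rewrite count_predC size_iota. Qed.

Lemma num_kept_lt l p r c : phi_keep l p c -> r < c -> num_kept l p r < num_kept l p c.
Proof.
case: c => // c keep_c lt_rc; rewrite /num_kept count_iota1S keep_c addn1 ltnS.
exact: count_iota1_mono.
Qed.

Definition phi_rows l p := [seq num_kept l p r | r <- p].

Lemma sorted_phi_rows l p : sorted geq p -> sorted geq (phi_rows l p).
Proof. by apply: homo_sorted => x y; exact: count_iota1_mono. Qed.

Lemma part_phi_rows l p a : 0 < a <= size p ->
  part (phi_rows l p) a = num_kept l p (part p a).
Proof. by case/andP=> a_gt0 a_le; rewrite /part (nth_map 0) // prednK. Qed.

Lemma col_len_phi_rows l p c : phi_keep l p c ->
  col_len (phi_rows l p) (num_kept l p c) = col_len p c.
Proof.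
move=> keep_c; rewrite /col_len count_map; apply: eq_count => r /=.
case: (leqP c r) => [le_cr | lt_rc]; first exact/idP/count_iota1_mono.
by apply/negbTE; rewrite -ltnNge num_kept_lt.
Qed.

Lemma hook_phi_rows l p a c : phi_keep l p c -> 0 < a <= size p -> c <= part p a ->
  hook (phi_rows l p) a (num_kept l p c) =
  hook p a c - (num_deleted l p (part p a) - num_deleted l p c).
Proof.
move=> keep_c a_row c_le; rewrite /hook part_phi_rows // col_len_phi_rows //.
have := num_kept_deleted l p (part p a); have := num_kept_deleted l p c.
have := count_iota1_mono (phi_keep l p) c_le.
have := count_iota1_mono (predC (phi_keep l p)) c_le.
rewrite /num_kept /num_deleted; lia.
Qed.

Section Deletion.

Variables (l : nat) (p : seq nat).
Hypotheses (l_gt1 : 1 < l) (p_part : is_partition p).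

Let p_sorted : sorted geq p. Proof. by have /andP[] := p_part. Qed.

(* Deleted columns have cobeta numbers divisible by [l], and cobeta is
   strictly increasing. *)
Lemma num_deleted_bound c e : 0 < size p -> 0 < c <= e -> e <= part p 1 ->
  num_deleted l p e + cobeta p c %/ l <= num_deleted l p c + cobeta p e %/ l.
Proof.
move=> p_ne0 /andP[c_gt0]; elim: e => [|e IHe] le_ce e_le; first lia.
case: (ltngtP c e.+1) le_ce => // [lt_ce | <-] _ //.
have {IHe} := IHe (ltac:(lia)) (ltac:(lia)).
rewrite /num_deleted count_iota1S /= (@phi_keepE l p e.+1 p_part p_ne0 e_le) negbK.
have e_gt0 : 0 < e by lia.
have lt_cobeta := ltn_cobeta p e_gt0 (ltnSn e).
case: (boolP (l %| cobeta p e.+1)) => [/dvdnP[m eq_m] | _] /=.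
  have : cobeta p e %/ l < m by rewrite ltn_divLR -?eq_m; lia.
  by rewrite eq_m mulnK; lia.
by have := leq_div2r l (ltnW lt_cobeta); lia.
Qed.

(* The deleted columns right of [c] in row [a] have distinct cobeta numbers,
   all multiples of [l] in the interval from [cobeta p c] to [beta p a]. *)
Lemma deleted_right_of_large_hook a c : 0 < a <= size p -> 0 < c <= part p a ->
  l < hook p a c -> num_deleted l p (part p a) - num_deleted l p c + l <= hook p a c.
Proof.
move=> a_row c_col l_lt; case/andP: (a_row) (c_col) => a_gt0 _ /andP[c_gt0 c_le].
have p_ne0 : 0 < size p by case/andP: a_row => ? ?; lia.
have last_gt0 := part_gt0 p_part a_row.
have bound := num_deleted_bound p_ne0 c_col (part_leq_part1 a p_sorted).
have hook_c := hook_cobeta p_sorted a_gt0 c_gt0 c_le.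
have hook_last := hook_cobeta p_sorted a_gt0 last_gt0 (leqnn _).
have hook_last_gt0 : 0 < hook p a (part p a) by rewrite /hook.
have le_div : cobeta p (part p a) %/ l <= (beta p a).-1 %/ l by apply: leq_div2r; lia.
have := @divn_diff_bound l (cobeta p c) (beta p a).-1 l_gt1 (ltac:(lia)).
lia.
Qed.

End Deletion.

Section Core.

Variables (l : nat) (p : seq nat).
Hypotheses (l_gt1 : 1 < l) (p_core : is_core l p).

Let p_part : is_partition p. Proof. by have /andP[] := p_core. Qed.
Let p_sorted : sorted geq p. Proof. by have /andP[] := p_part. Qed.

Lemma core_hook_ndvd a c : 0 < a <= size p -> 0 < c <= part p a -> ~~ (l %| hook p a c).
Proof.
move=> a_row c_col; have /andP[_ /allP rows_ok] := p_core.
have a_in : a \in iota 1 (size p) by rewrite mem_iota; lia.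
by have /allP -> // := rows_ok a a_in; rewrite mem_iota; lia.
Qed.

Lemma core_hook_neq a c : 0 < a <= size p -> 0 < c <= part p a -> hook p a c != l.
Proof.
by move=> a_row c_col; apply: contraNneq (core_hook_ndvd a_row c_col) => ->.
Qed.

(* If [l] divided [beta p a], then [beta p a - l] would be either a smaller
   beta number divisible by [l] or give a hook of length [l] in row [a]. *)
Lemma core_beta_ndvd a : 0 < a <= size p -> ~~ (l %| beta p a).
Proof.
move=> a_row; have [n] := ubnP (beta p a); elim: n a a_row => // n IHn a a_row lt_n.
apply/negP => l_dvd; have a_gt0 : 0 < a by case/andP: a_row.
have beta_gt0 : 0 < beta p a by have := part_gt0 p_part a_row; rewrite /beta; lia.
have l_le : l <= beta p a by apply: dvdn_leq.
have lt_beta : beta p a - l < beta p a by lia.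
have [[a' a'_row beta_a'] | [c c_col cobeta_c]] := beta_cobeta_cover p_part a_row lt_beta.
- by have /negP[] := IHn a' a'_row (ltac:(lia)); rewrite beta_a' dvdn_sub.
- case/andP: (c_col) => c_gt0 c_le.
  have := hook_cobeta p_sorted a_gt0 c_gt0 c_le; rewrite cobeta_c => hook_l.
  by have /eqP[] := core_hook_neq a_row c_col; lia.
Qed.

(* The deleted box is the one whose cobeta number is the largest multiple of
   [l] below [beta p a]. *)
Lemma count_deleted_small_hook a : 0 < a <= size p ->
  count (fun c => ~~ phi_keep l p c && (hook p a c <= l)) (iota 1 (part p a)) = 1.
Proof.
move=> a_row; have a_gt0 : 0 < a by case/andP: a_row.
have p_ne0 : 0 < size p by case/andP: a_row => ? ?; lia.
have beta_ndvd := core_beta_ndvd a_row.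
have beta_mod := divn_eq (beta p a) l; set M := beta p a %/ l * l in beta_mod *.
have mod_lt := @ltn_pmod (beta p a) l (ltnW l_gt1).
have mod_gt0 : 0 < beta p a %% l by rewrite lt0n.
have M_lt : M < beta p a by lia.
have [[a' a'_row beta_a'] | [c0 /andP[c0_gt0 c0_le] cobeta_c0]] :=
  beta_cobeta_cover p_part a_row M_lt.
  by have := core_beta_ndvd a'_row; rewrite beta_a' dvdn_mull.
have hook_c0 := hook_cobeta p_sorted a_gt0 c0_gt0 c0_le.
rewrite -(eq_in_count (a1 := pred1 c0)).
  by rewrite count_uniq_mem ?iota_uniq // mem_iota; lia.
move=> c; rewrite mem_iota => /andP[c_gt0 c_lt]; have c_le : c <= part p a by lia.
have c_le1 : c <= part p 1 by apply: leq_trans c_le (part_leq_part1 _ p_sorted).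
rewrite /= phi_keepE // ?c_gt0 // negbK.
apply/eqP/andP => [-> | [l_dvd hook_le]].
  by rewrite cobeta_c0 dvdn_mull //; split=> //; lia.
have hook_c := hook_cobeta p_sorted a_gt0 c_gt0 c_le.
have hook_lt : hook p a c < l.
  by rewrite ltn_neqAle hook_le core_hook_neq // c_gt0.
have hook_gt0 : 0 < hook p a c by rewrite /hook.
apply: (@cobeta_inj p _ _ c_gt0 c0_gt0); apply: (@eq_dvdn_window l) => //.
  by rewrite cobeta_c0 dvdn_mull.
all: lia.
Qed.

Lemma count_small_hooks_phi_rows a : 0 < a <= size p ->
  count (fun c => hook (phi_rows l p) a c <= l - 1) (iota 1 (part (phi_rows l p) a)) =
  (count (fun c => hook p a c <= l) (iota 1 (part p a))).-1.
Proof.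
move=> a_row; rewrite part_phi_rows // count_iota1_reindex.
rewrite -[in RHS]size_filter -[in RHS](count_predC (phi_keep l p)) !count_filter.
rewrite count_deleted_small_hook // addn1 /=.
apply: eq_in_count => c; rewrite mem_iota => /andP[c_gt0 c_lt] /=.
have c_le : c <= part p a by rewrite -ltnS -add1n.
have c_col : 0 < c <= part p a by rewrite c_gt0.
case keep_c: (phi_keep l p c) => //=; rewrite hook_phi_rows //.
case: (ltnP l (hook p a c)) => [l_lt | hook_le].
  by have := deleted_right_of_large_hook l_gt1 p_part a_row c_col l_lt; lia.
have : hook p a c < l by rewrite ltn_neqAle hook_le core_hook_neq.
lia.
Qed.

End Core.

Lemma nth_drop0 s i : sorted geq s -> nth 0 (drop0 s) i = nth 0 s i.
Proof.
elim: s i => [|[|x] s IHs] i s_sorted /=; first by rewrite nth_nil.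
  have /allP s_zero := order_path_min geq_trans s_sorted.
  have {}s_zero y : y \in s -> y = 0 by move/s_zero; rewrite /= leqn0 => /eqP.
  rewrite (eq_in_filter (a2 := pred0)) ?filter_pred0 ?nth_nil; last first.
    by move=> y /s_zero ->.
  case: i => // i /=; case: (ltnP i (size s)) => [lt_i | ?]; last by rewrite nth_default.
  by rewrite (s_zero _ (mem_nth 0 lt_i)).
by case: i => //= i; apply/IHs/(path_sorted s_sorted).
Qed.

Lemma col_len_drop0 s c : 0 < c -> col_len (drop0 s) c = col_len s c.
Proof.
move=> c_gt0; rewrite /col_len count_filter; apply: eq_count => r /=.
by case: (leqP c r) => //= c_le; apply: leq_trans c_le.
Qed.

Lemma hook_drop0 s a c : sorted geq s -> 0 < c -> hook (drop0 s) a c = hook s a c.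
Proof. by move=> s_sorted c_gt0; rewrite /hook /part nth_drop0 // col_len_drop0. Qed.

Lemma drop0_map_iota_ext (f : nat -> nat) n N : n <= N -> (forall a, n < a -> f a = 0) ->
  drop0 [seq f a | a <- iota 1 n] = drop0 [seq f a | a <- iota 1 N].
Proof.
move=> le_nN f_zero; rewrite -(subnKC le_nN) iotaD map_cat filter_cat.
suff -> : drop0 [seq f a | a <- iota (1 + n) (N - n)] = [::] by rewrite cats0.
apply/eqP/negbNE; rewrite -has_filter; apply/hasPn => y /mapP[a].
by rewrite mem_iota => /andP[lt_na _] ->; rewrite f_zero //; lia.
Qed.

Lemma rho_drop0 m s : sorted geq s -> rho m (drop0 s) = rho m s.
Proof.
move=> s_sorted; rewrite /rho.
set F := fun a => count (fun c => hook s a c <= m) (iota 1 (part s a)).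
rewrite (eq_map (g := F)); last first.
  move=> a; rewrite /F /part nth_drop0 //; apply: eq_in_count => c.
  by rewrite mem_iota => /andP[c_gt0 _]; rewrite hook_drop0.
apply: drop0_map_iota_ext; first by rewrite size_filter count_size.
move=> a lt_a; rewrite /F /part -nth_drop0 // nth_default //; lia.
Qed.

Lemma drop0_map_predn_drop0 s :
  drop0 [seq x.-1 | x <- drop0 s] = drop0 [seq x.-1 | x <- s].
Proof. by elim: s => //= -[|[|x]] s IHs; rewrite /= IHs. Qed.

Lemma rho_phi_tilde l lam : 1 < l -> is_core l lam ->
  rho (l - 1) (phi_tilde l lam) = upsilon (rho l lam).
Proof.
move=> l_gt1 lam_core; have /andP[lam_part _] := lam_core.
have lam_sorted : sorted geq lam by case/andP: lam_part.
change (phi_tilde l lam) with (drop0 (phi_rows l lam)).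
rewrite rho_drop0 ?sorted_phi_rows // /rho /upsilon drop0_map_predn_drop0 -map_comp.
rewrite size_map; congr (drop0 _); apply/eq_in_map => a; rewrite mem_iota => a_row /=.
by rewrite count_small_hooks_phi_rows.
Qed.

Lemma sorted_predn s : sorted geq s -> sorted geq [seq x.-1 | x <- s].
Proof. by apply: homo_sorted => x y /=; case: x; case: y. Qed.

Lemma nth_upsilon nu i : is_partition nu -> i < size nu ->
  nth 0 nu i = (nth 0 (upsilon nu) i).+1.
Proof.
case/andP=> nu_sorted /allP nu_pos lt_i.
rewrite nth_drop0 ?sorted_predn // (nth_map 0) // prednK //.
exact/nu_pos/mem_nth.
Qed.

Section Upsilon.

Variables (l k : nat).

Lemma upsilon_bounded nu : is_partition nu -> head 0 nu <= l - 1 -> size nu = k ->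
  [/\ is_partition (upsilon nu), head 0 (upsilon nu) <= l - 2 & size (upsilon nu) <= k].
Proof.
move=> nu_part head_le size_nu; have /andP[nu_sorted _] := nu_part.
split; last by rewrite size_filter (leq_trans (count_size _ _)) // size_map size_nu.
- by rewrite /is_partition (sorted_filter geq_trans) ?sorted_predn //= filter_all.
- case def_ups: (upsilon nu) => [|y s] //=.
  have : y \in upsilon nu by rewrite def_ups mem_head.
  rewrite mem_filter => /andP[_ /mapP[x nu_x ->]].
  by have := mem_leq_head nu_sorted nu_x; lia.
Qed.

Lemma upsilon_inj nu1 nu2 : is_partition nu1 -> size nu1 = k ->
  is_partition nu2 -> size nu2 = k -> upsilon nu1 = upsilon nu2 -> nu1 = nu2.
Proof.
move=> nu1_part size1 nu2_part size2 eq_ups.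
apply: (eq_from_nth (x0 := 0)) => [|i lt_i]; first by rewrite size1 size2.
by rewrite (nth_upsilon nu1_part lt_i) (nth_upsilon nu2_part) ?eq_ups // size2 -size1.
Qed.

Lemma upsilon_surj sigma : 1 < l -> is_partition sigma -> head 0 sigma <= l - 2 ->
  size sigma <= k -> exists nu, [/\ is_partition nu, head 0 nu <= l - 1, size nu = k
                                & upsilon nu = sigma].
Proof.
move=> l_gt1 /andP[sigma_sorted sigma_pos] head_le size_le.
set s := sigma ++ nseq (k - size sigma) 0.
have size_s : size s = k by rewrite size_cat size_nseq subnKC.
have head_s : head 0 s = head 0 sigma by rewrite /s; case: (sigma) => //=; case: (k - _).
have s_sorted : sorted geq s.
  rewrite (sorted_pairwise geq_trans) pairwise_cat -(sorted_pairwise geq_trans) sigma_sorted.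
  apply/and3P; split=> //; first by apply/allrelP => x y _; rewrite mem_nseq => /andP[_ /eqP->].
  by elim: (k - size sigma) => //= n ->; rewrite all_nseq /= orbT.
exists [seq x.+1 | x <- s]; split.
- by rewrite /is_partition sorted_map all_map; apply/andP; split; last exact/allP.
- by case: s head_s {size_s s_sorted} => //= x _ ->; lia.
- by rewrite size_map.
- rewrite /upsilon -map_comp map_id filter_cat filter_nseq /= cats0.
  exact/all_filterP.
Qed.

End Upsilon.

Unset Implicit Arguments.

Theorem mainTheorem10 (l k : nat) : 2 <= l -> 1 <= k ->
  ((forall nu, is_partition nu -> head 0 nu <= l - 1 -> size nu = k ->
      [/\ is_partition (upsilon nu), head 0 (upsilon nu) <= l - 2
        & size (upsilon nu) <= k]) /\
   (forall nu1 nu2,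
      is_partition nu1 -> head 0 nu1 <= l - 1 -> size nu1 = k ->
      is_partition nu2 -> head 0 nu2 <= l - 1 -> size nu2 = k ->
      upsilon nu1 = upsilon nu2 -> nu1 = nu2) /\
   (forall sigma, is_partition sigma -> head 0 sigma <= l - 2 -> size sigma <= k ->
      exists nu, [/\ is_partition nu, head 0 nu <= l - 1, size nu = k
                   & upsilon nu = sigma])) /\
  (forall lam, is_core l lam -> size lam = k ->
     rho (l - 1) (phi_tilde l lam) = upsilon (rho l lam)).
Proof.
move=> l_gt1 _; split; last by move=> lam lam_core _; apply: rho_phi_tilde.
split; first exact: upsilon_bounded.
split; last by move=> sigma; apply: upsilon_surj.
move=> nu1 nu2 nu1_part _ size1 nu2_part _ size2.
exact: upsilon_inj nu1_part size1 nu2_part size2.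
Qed.
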